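(* Let $r\in\{3,5\}$, let $q$ be an odd prime distinct from $r$, let $R=\mathrm{C}_q\times\mathrm{D}_{2r}$, and let $S\subseteq R$ with $S=S^{-1}$. If $\mathrm{Cay}(R,S)$ is a nontrivial generalised wreath product with respect to subgroups $K$ and $H$, and $K$ has prime order, then $\mathrm{Aut}(R)_S>1$.
   Context: $\mathrm{C}_q$ is the cyclic group of order $q$, $\mathrm{D}_{2r}$ the dihedral group of order $2r$. $\mathrm{Aut}(R)_S$ is the group of automorphisms of $R$ fixing $S$ setwise. $\mathrm{Cay}(R,S)$ (vertex set $R$, arcs $r\to sr$ for $s\in S$) is a nontrivial generalised wreath product with respect to $K$ and $H$ if $1<K\trianglelefteq H<R$ and $K(S\setminus H)=S\setminus H=(S\setminus H)K$. *)

From mathcomp Require Import all_boot all_fingroup all_algebra all_solvable.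
Set Implicit Arguments. Unset Strict Implicit. Unset Printing Implicit Defensive.

Open Scope group_scope.

(* The group C_q x D_{2r}, as the external direct product of the additive
   group 'Z_q (cyclic of order q, for q >= 2) and MathComp's dihedral group
   'D_(2r) of order 2r (for r >= 2). *)
Definition CqD2r (q r : nat) : finGroupType := ('Z_q * 'D_(2 * r))%type.

Definition gen_wreath (gT : finGroupType) (R : {set gT}) (S : {set gT})
  (K H : {group gT}) : Prop :=
  [/\ K :!=: 1, K <| H, H \proper R,
      K * (S :\: H) = S :\: H & (S :\: H) * K = S :\: H].

Definition AutS (gT : finGroupType) (R S : {set gT}) : {set {perm gT}} :=
  [set a in Aut R | a @: S == S].

From mathcomp Require Import all_boot all_fingroup all_algebra all_solvable.
From mathcomp Require Import zify.
Set Implicit Arguments. Unset Strict Implicit. Unset Printing Implicit Defensive.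
Open Scope group_scope.

(* For g in D_2r the map (z, d) |-> (z^-1, d^g) is an automorphism of C_q x D_2r,
   nontrivial as q is odd, so it suffices to find g for which it preserves S.
   It maps s to s^-1, which lies in S, whenever g inverts the D_2r-component of s,
   e.g. when that component is a rotation and g a reflection.  Being of prime order
   dividing 2qr, K is C_q x 1, 1 x C_r, or generated by some (1, u) with u a
   reflection.  For s in S \ H all k s k' with k, k' in K lie in S, which supplies
   the image of s (for K = 1 x C_r it is s^-1 (1, s_2 s_2^g)), while the proper
   subgroup H cannot contain elements of all three orders 2, q and r.  What is left
   is handled by taking for g a reflection that normalises the set of reflections
   occurring in S; it exists because for r = 3, 5 every subset of Z/rZ is symmetric
   about some point. *)

(* Reflections of D_2r are the x^i y, and x^j y conjugates x^i y to x^(2j - i) y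
   (written 2j + r - i to avoid truncated subtraction).  [mirror_symmetric 7]
   fails, e.g. for {0, 1, 3}. *)
Definition mirror_symmetric (r : nat) : Prop :=
  forall b : pred nat, exists2 j, (j < r)%N &
    forall i, (i < r)%N -> b i -> b ((2 * j + r - i) %% r)%N.

Section Mirror.
Local Open Scope nat_scope.

Local Ltac mirror_center j :=
  exists j => //; case=> [|[|[|[|[|i]]]]] //=;
  repeat match goal with H : ?bk = _ |- context [?bk] => rewrite H end.

Lemma mirror_symmetric_3_5 r : r \in [:: 3; 5] -> mirror_symmetric r.
Proof.
rewrite !inE => /orP[] /eqP-> b.
  case B0: (b 0); case B1: (b 1); case B2: (b 2);
    by [mirror_center 0 | mirror_center 1 | mirror_center 2].
case B0: (b 0); case B1: (b 1); case B2: (b 2); case B3: (b 3); case B4: (b 4);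
  by [mirror_center 0 | mirror_center 1 | mirror_center 2 | mirror_center 3 | mirror_center 4].
Qed.

End Mirror.

Lemma coprime_order_eq1 (gT : finGroupType) (t : gT) m n :
  coprime m n -> #[t] %| m -> #[t] %| n -> t = 1.
Proof.
move=> co tm tn; apply/eqP; rewrite -order_eq1 -dvdn1 -(eqnP co).
by rewrite dvdn_gcd tm.
Qed.

Lemma AutS_neq1 (gT : finGroupType) (S : {set gT}) (f : gT -> gT) (f_inj : injective f) :
  {morph f : a b / a * b} -> {in S, forall s, f s \in S} -> (exists a, f a != a) ->
  AutS [set: gT] S != 1.
Proof.
move=> fM fS [a fa]; pose p := perm f_inj.
have p_neq1 : p != 1.
  by apply: contraNneq fa => p1; rewrite -(permE f_inj) -/p p1 perm1.
have pS : p \in AutS [set: gT] S.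
  rewrite !inE; apply/andP; split.
    apply/andP; split; first by apply/subsetP => b; rewrite inE.
    by apply/morphicP => b c _ _; rewrite !permE.
  rewrite eqEcard card_imset ?leqnn ?andbT; last exact: perm_inj.
  by apply/subsetP => _ /imsetP[s Ss ->]; rewrite /p permE fS.
by apply: contraTneq pS => ->; rewrite inE.
Qed.

Lemma gen_wreath_mulg_closed (gT : finGroupType) (R S : {set gT}) (K H : {group gT}) s k1 k2 :
  gen_wreath R S K H -> s \in S :\: H -> k1 \in K -> k2 \in K -> k1 * s * k2 \in S.
Proof.
case=> _ _ _ KS SK sSH Kk1 Kk2.
have : k1 * s * k2 \in S :\: H by rewrite -SK -KS !mem_mulg.
by case/setDP.
Qed.

Section DirectProduct.

Variables A B : finGroupType.

Lemma mul_pairE (a b : A * B) : a * b = (a.1 * b.1, a.2 * b.2).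
Proof. by []. Qed.

Lemma invg_pairE (a : A * B) : a^-1 = (a.1^-1, a.2^-1).
Proof. by []. Qed.

Lemma conjg_pairE (a b : A * B) : a ^ b = (a.1 ^ b.1, a.2 ^ b.2).
Proof. by []. Qed.

Lemma order_fst_dvdn (a : A * B) : #[a.1] %| #[a].
Proof. exact: (morph_order (fst_morphism A B) (in_setT a)). Qed.

Lemma order_snd_dvdn (a : A * B) : #[a.2] %| #[a].
Proof. exact: (morph_order (snd_morphism A B) (in_setT a)). Qed.

Lemma sub_setXT1 (K : {group A * B}) : coprime #|K| #|B| -> K \subset setX [set: A] 1.
Proof.
move=> coKB; apply/subsetP => a Ka; rewrite !inE /=; apply/eqP.
apply: (coprime_order_eq1 coKB); first exact: dvdn_trans (order_snd_dvdn a) (order_dvdG Ka).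
by rewrite -cardsT order_dvdG ?inE.
Qed.

Lemma sub_setX1T (K : {group A * B}) : coprime #|K| #|A| -> K \subset setX 1 [set: B].
Proof.
move=> coKA; apply/subsetP => a Ka; rewrite !inE andbT; apply/eqP.
apply: (coprime_order_eq1 coKA); first exact: dvdn_trans (order_fst_dvdn a) (order_dvdG Ka).
by rewrite -cardsT order_dvdG ?inE.
Qed.

End DirectProduct.

Lemma invg_eq_odd_order (gT : finGroupType) (t : gT) : odd #[t] -> t^-1 = t -> t = 1.
Proof.
move=> odd_t tV; apply: (@coprime_order_eq1 _ _ 2 #[t]); rewrite ?coprime2n //.
by rewrite order_dvdn expgS expg1 -{1}tV mulVg.
Qed.

Section Dihedral.

Variables (gT : finGroupType) (x y : gT) (r : nat).
Hypotheses (r_prime : prime r) (r_odd : odd r) (card_gT : #|gT| = (2 * r)%N)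
  (gen_xy : <[x]> <*> <[y]> = [set: gT])
  (xr : x ^+ r = 1) (y2 : y ^+ 2 = 1) (xy : x ^ y = x^-1).

Local Notation C := <[x]>.

Lemma invg_y : y^-1 = y.
Proof. by apply/eqP; rewrite eq_invg_mul -y2 expgS expg1. Qed.

Lemma norm_rot : [set: gT] \subset 'N(C).
Proof.
by rewrite -gen_xy join_subG normG norms_cycle xy groupV cycle_id.
Qed.

Lemma memJ_rot d g : (d ^ g \in C) = (d \in C).
Proof. by rewrite memJ_norm // (subsetP norm_rot) ?inE. Qed.

Lemma mul_rot_y : C * <[y]> = [set: gT].
Proof. by rewrite -norm_joinEr ?gen_xy // (subset_trans _ norm_rot) ?subsetT. Qed.

Lemma card_rot : #|C| = r.
Proof.
have Cr : #|C| %| r by rewrite -orderE order_dvdn xr.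
have y_le2 : (#|<[y]>| <= 2)%N by rewrite -orderE dvdn_leq // order_dvdn y2.
have : (2 * r <= #|C| * 2)%N.
  rewrite -card_gT -cardsT -mul_rot_y; apply: leq_trans (leq_mul (leqnn _) y_le2).
  by rewrite mul_cardG leq_pmulr ?cardG_gt0.
by move: (dvdn_leq (prime_gt0 r_prime) Cr); lia.
Qed.

Lemma y_notin_rot : y \notin C.
Proof.
apply/negP => Cy; have : [set: gT] \subset C by rewrite -mul_rot_y mul_subG // cycle_subG.
move/subset_leq_card; rewrite cardsT card_gT card_rot.
by rewrite leqNgt -{1}(mul1n r) ltn_pmul2r ?prime_gt0.
Qed.

Lemma refl_notin_rot j : x ^+ j * y \notin C.
Proof.
by apply: contra y_notin_rot => Cg; rewrite -(mulKg (x ^+ j) y) groupM ?groupV ?mem_cycle.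
Qed.

Lemma notin_rotP d : d \notin C -> exists2 c, c \in C & d = c * y.
Proof.
move=> Cd; have : d \in C * <[y]> by rewrite mul_rot_y inE.
case/mulsgP => c _ Cc /cycleP[j ->] def_d; exists c => //.
move: Cd; rewrite def_d -(expg_mod j y2) modn2.
by case: (odd j) => //; rewrite expg0 mulg1 Cc.
Qed.

Lemma conjy_rot c : c \in C -> c ^ y = c^-1.
Proof. by case/cycleP => i ->; rewrite conjXg xy expgVn. Qed.

Lemma invg_refl d : d \notin C -> d^-1 = d.
Proof.
by case/notin_rotP => c Cc ->; rewrite invMg invg_y [c * y]conjgC conjy_rot.
Qed.

Lemma conjg_refl_rot g d : g \notin C -> d \in C -> d ^ g = d^-1.
Proof.
case/notin_rotP => c Cc -> Cd.
by rewrite conjgM [d ^ c]conjgE (centsP (cycle_abelian x) _ Cd _ Cc) mulKg conjy_rot.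
Qed.

Lemma mul_refl u v : u \notin C -> v \notin C -> u * v \in C.
Proof.
move=> Cu Cv; rewrite -(invg_refl Cv).
case/notin_rotP: Cu => c Cc ->; case/notin_rotP: Cv => c' Cc' ->.
by rewrite invMg mulgA mulgK groupM ?groupV.
Qed.

Lemma odd_order_rot c : c \in C -> odd #[c].
Proof. by move=> Cc; rewrite (dvdn_odd _ r_odd) // -card_rot order_dvdG. Qed.

Lemma commute_refl_eq u d : u \notin C -> commute d u -> d = 1 \/ d = u.
Proof.
move=> Cu du.
have rot_eq1 e : e \in C -> commute e u -> e = 1.
  move=> Ce eu; apply: invg_eq_odd_order (odd_order_rot Ce) _.
  by rewrite -(conjg_refl_rot Cu Ce) conjgE eu mulKg.
have [Cd | Cd] := boolP (d \in C); first by left; apply: rot_eq1.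
right; apply/eqP; rewrite eq_mulVg1 (invg_refl Cd); apply/eqP/rot_eq1.
  exact: mul_refl.
by apply/commute_sym/commuteM; [apply: commute_sym | apply: commute_refl].
Qed.

Lemma order_refl d : d \notin C -> #[d] = 2.
Proof.
move=> Cd; apply: nt_prime_order => //; last by apply: contraNneq Cd => ->.
by rewrite expgS expg1 -{1}(invg_refl Cd) mulVg.
Qed.

Lemma rot_order_dvd2 d : d \in C -> #[d] %| 2 -> d = 1.
Proof.
move=> Cd d2; apply: (coprime_order_eq1 (_ : coprime 2 r)); rewrite ?coprime2n //.
by rewrite -card_rot order_dvdG.
Qed.

Lemma order_rot d : d \in C -> d != 1 -> #[d] = r.
Proof.
move=> Cd; apply: nt_prime_order => //.
by move: Cd => /cycleP[i ->]; rewrite -expgM mulnC expgM xr expg1n.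
Qed.

Lemma conjg_refl_refl i j : (i <= r)%N ->
  (x ^+ i * y) ^ (x ^+ j * y) = x ^+ (2 * j + r - i) * y.
Proof.
move=> le_ir.
have yxy : y * x ^+ i * y = x ^+ (r - i).
  rewrite -{1}invg_y -mulgA -conjgE conjXg xy expgVn.
  by apply/eqP; rewrite eq_invg_mul -expgD subnKC ?xr.
rewrite conjgE (invg_refl (refl_notin_rot j)) !mulgA.
rewrite -(mulgA (x ^+ j) y) -(mulgA (x ^+ j) _ y) yxy -!expgD.
by congr (x ^+ _ * y); lia.
Qed.

Hypothesis r_mirror : mirror_symmetric r.

Lemma refl_conj_stable (T : {set gT}) : T \subset ~: C ->
  exists2 g, g \notin C & {in T, forall u, u ^ g \in T}.
Proof.
move=> TC; have [j lt_jr Tj] := r_mirror (fun i => x ^+ i * y \in T).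
exists (x ^+ j * y); first exact: refl_notin_rot.
move=> u Tu; have /notin_rotP[_ /cycleP[i ->] def_u] : u \notin C.
  by have := subsetP TC u Tu; rewrite inE.
have lt_ir : (i %% r < r)%N by rewrite ltn_mod prime_gt0.
rewrite def_u -(expg_mod i xr) conjg_refl_refl ?(ltnW lt_ir) // -(expg_mod _ xr).
by apply: Tj lt_ir _; rewrite expg_mod // -def_u.
Qed.

Section CyclicTimesDihedral.

Variables (Z : finGroupType) (q : nat).
Hypotheses (q_prime : prime q) (q_odd : odd q) (q_neq_r : q != r) (card_Z : #|Z| = q).

Local Notation G := (Z * gT)%type.

Definition inv_conj (g : gT) (a : G) : G := (a.1^-1, a.2 ^ g).

Lemma inv_conj_morphM g : {morph inv_conj g : a b / a * b}.
Proof.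
have cZ : abelian [set: Z] by apply/cyclic_abelian/prime_cyclic; rewrite cardsT card_Z.
move=> a b; rewrite /inv_conj /= invMg conjMg.
by rewrite (centsP cZ _ (in_setT b.1^-1) _ (in_setT a.1^-1)).
Qed.

Lemma inv_conj_inj g : injective (inv_conj g).
Proof. by move=> [a1 a2] [b1 b2] [/invg_inj -> /conjg_inj ->]. Qed.

Lemma inv_conj_moves g : exists a, inv_conj g a != a.
Proof.
have [z _ oz] : {z | z \in [set: Z] & #[z] = q} by apply: Cauchy; rewrite ?cardsT ?card_Z.
exists (z, 1); rewrite /inv_conj /= conj1g xpair_eqE eqxx andbT.
apply/eqP => zV; have z1 : z = 1 by apply: invg_eq_odd_order; rewrite ?oz.
by move: (prime_gt1 q_prime); rewrite -oz z1 order1.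
Qed.

Lemma AutS_neq1_inv_conj (S : {set G}) g :
  {in S, forall s, inv_conj g s \in S} -> AutS [set: G] S != 1.
Proof.
by move=> gS; apply: AutS_neq1 (@inv_conj_inj g) (@inv_conj_morphM g) gS (@inv_conj_moves g).
Qed.

Lemma order_Z (z : Z) : z != 1 -> #[z] = q.
Proof. by apply: nt_prime_order; rewrite // -card_Z -cardsT expg_cardG ?inE. Qed.

Lemma proper_subgroup_indivisible (H : {group G}) : H \proper [set: G] ->
  2 %| #|H| -> q %| #|H| -> r %| #|H| -> False.
Proof.
move=> ltHG H2 Hq Hr.
have coqr : coprime q r by rewrite prime_coprime // dvdn_prime2.
have coq2r : coprime q (2 * r) by rewrite coprimeMr coprime_sym coprime2n q_odd.
have : (q * (2 * r)) %| #|H|.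
  by rewrite Gauss_dvd // Gauss_dvd ?coprime2n // Hq H2.
move/(dvdn_leq (cardG_gt0 H)); rewrite leqNgt.
by have := proper_card ltHG; rewrite cardsT card_prod card_Z card_gT => ->.
Qed.

Lemma card_q_subgroup (K : {group G}) : #|K| = q -> K :=: setX [set: Z] 1.
Proof.
move=> card_K; have sKZ : K \subset setX [set: Z] 1.
  apply: sub_setXT1; rewrite card_K card_gT coprimeMr coprime_sym coprime2n q_odd.
  by rewrite prime_coprime // dvdn_prime2.
by apply/eqP; rewrite eqEcard sKZ cardsX cards1 cardsT card_K card_Z muln1 /=.
Qed.

Lemma card_r_subgroup (K : {group G}) : #|K| = r -> K :=: setX 1 C.
Proof.
move=> card_K; have sK1 : K \subset setX 1 [set: gT].
  by apply: sub_setX1T; rewrite card_K card_Z prime_coprime // dvdn_prime2 // eq_sym.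
have sKC : K \subset setX 1 C.
  apply/subsetP => a Ka; move/subsetP/(_ a Ka): sK1; rewrite !inE andbT => -> /=.
  apply: contraT => aC; have := dvdn_trans (order_snd_dvdn a) (order_dvdG Ka).
  by rewrite order_refl // card_K dvdn2 r_odd.
by apply/eqP; rewrite eqEcard sKC cardsX cards1 mul1n card_rot card_K /=.
Qed.

Section Wreath.

Variables (S : {set G}) (K H : {group G}).
Hypotheses (S_invg : S^-1 = S) (SKH_wreath : gen_wreath [set: G] S K H).

Lemma inv_conj_inv g s : s \in S -> s.2 ^ g = s.2^-1 -> inv_conj g s \in S.
Proof.
by move=> Ss sg; rewrite /inv_conj sg -invg_pairE -S_invg memV_invg.
Qed.

Lemma inv_conj_rot g s : g \notin C -> s \in S -> s.2 \in C -> inv_conj g s \in S.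
Proof. by move=> gC Ss Cs; apply: inv_conj_inv; rewrite // conjg_refl_rot. Qed.

Lemma wreath_mulg k1 s k2 : s \in S -> s \notin H -> k1 \in K -> k2 \in K ->
  k1 * s * k2 \in S.
Proof. by move=> Ss sH; apply: gen_wreath_mulg_closed SKH_wreath _; rewrite inE sH. Qed.

Lemma wreath_mulVg k1 s k2 : s \in S -> s \notin H -> k1 \in K -> k2 \in K ->
  k1 * s^-1 * k2 \in S.
Proof. by move=> Ss sH; apply: wreath_mulg; rewrite ?groupV // -S_invg memV_invg. Qed.

Lemma inv_conj_stable_Kq : #|K| = q -> exists g, {in S, forall s, inv_conj g s \in S}.
Proof.
move=> card_K; case: SKH_wreath => _ nKH ltHG _ _.
have Kz z : (z, 1) \in K by rewrite (card_q_subgroup card_K) !inE /= eqxx.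
have S_fst_any s z : s \in S -> s \notin H -> (z, s.2) \in S.
  move=> Ss sH; have := wreath_mulg Ss sH (Kz (z * s.1^-1)) (group1 K).
  by rewrite mulg1 mul_pairE /= mulgKV mul1g.
have [HC | /subsetPn[h Hh]] := boolP (H \subset [set a : G | a.2 \in C]); last first.
  rewrite inE => hC.
  have H_inv a : a \in H -> a.2^-1 = a.2.
    move=> Ha; have [-> | nt_a2] := eqVneq a.2 1; first by rewrite invg1.
    have [Ca | Ca] := boolP (a.2 \in C); last exact: invg_refl.
    exfalso; apply: (proper_subgroup_indivisible ltHG).
    - by rewrite -(order_refl hC) (dvdn_trans (order_snd_dvdn h)) ?order_dvdG.
    - by rewrite -card_K cardSg ?normal_sub.
    - by rewrite -(order_rot Ca nt_a2) (dvdn_trans (order_snd_dvdn a)) ?order_dvdG.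
  exists 1 => s Ss; have [sH | sH] := boolP (s \in H).
    by apply: inv_conj_inv; rewrite // conjg1 H_inv.
  by rewrite /inv_conj conjg1 S_fst_any.
have [g gC Tg] := refl_conj_stable (subsetDr [set a.2 | a in S] C).
exists g => s Ss; have [Cs | Cs] := boolP (s.2 \in C); first exact: inv_conj_rot.
have /setDP[/imsetP[a Sa a2] gCs] : s.2 ^ g \in [set a.2 | a in S] :\: C.
  by apply: Tg; rewrite !inE Cs imset_f.
rewrite /inv_conj a2 S_fst_any //.
by apply: contra gCs => /(subsetP HC); rewrite inE a2.
Qed.

Lemma inv_conj_stable_K2 : #|K| = 2 -> exists g, {in S, forall s, inv_conj g s \in S}.
Proof.
move=> card_K; case: SKH_wreath => ntK nKH _ _ _.
case/trivgPn: ntK => k Kk nt_k.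
have ok : #[k] = 2 by apply: nt_prime_order; rewrite // -card_K expg_cardG.
have k1 : k.1 = 1.
  apply: (coprime_order_eq1 (_ : coprime 2 q)); rewrite ?coprime2n // -?ok ?order_fst_dvdn //.
  by rewrite -card_Z -cardsT order_dvdG ?inE.
set u := k.2; have def_k : k = (1, u) by rewrite [LHS]surjective_pairing k1.
have uC : u \notin C.
  apply: contra nt_k => Cu.
  have u1 : u = 1 by apply: rot_order_dvd2; rewrite // -ok order_snd_dvdn.
  by rewrite def_k u1 eqxx.
have defK : K :=: [set 1; k].
  by apply/eqP; rewrite -(cycle2g ok) eq_sym eqEcard cycle_subG Kk -orderE ok card_K /=.
exists u => s Ss; have [sH | sH] := boolP (s \in H).
  have : k ^ s \in [set 1; k] by rewrite -defK memJ_norm ?(subsetP (normal_norm nKH)).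
  rewrite !inE conjg_eq1 (negbTE nt_k) def_k conjg_pairE xpair_eqE => /andP[_ /eqP us].
  have su : commute s.2 u by apply: commute_sym; rewrite /commute conjgC us.
  apply: inv_conj_inv => //.
  have [-> | ->] := commute_refl_eq uC su; first by rewrite conj1g invg1.
  by rewrite (invg_refl uC) conjgE mulKg.
have [Cs | Cs] := boolP (s.2 \in C); first exact: inv_conj_rot.
suff -> : inv_conj u s = k * s^-1 * k by apply: wreath_mulVg.
rewrite def_k /inv_conj conjgE (invg_refl uC) -{1}(invg_refl Cs).
by rewrite !mul_pairE /= mul1g mulg1 mulgA.
Qed.

Lemma inv_conj_stable_Kr : #|K| = r -> exists g, {in S, forall s, inv_conj g s \in S}.
Proof.
move=> card_K; case: SKH_wreath => _ nKH ltHG _ _.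
have K_rot c : c \in C -> (1, c) \in K.
  by move=> Cc; rewrite (card_r_subgroup card_K) !inE eqxx.
have refl_step g s : g \notin C -> s \in S -> s \notin H -> s.2 \notin C ->
    inv_conj g s \in S.
  move=> gC Ss sH Cs; have Css : s.2 * s.2 ^ g \in C by rewrite mul_refl ?memJ_rot.
  suff -> : inv_conj g s = 1 * s^-1 * (1, s.2 * s.2 ^ g).
    by apply: wreath_mulVg; rewrite ?group1 ?K_rot.
  by rewrite /inv_conj !mul_pairE /= mul1g mulg1 mul1g mulKg.
have [H1 | /subsetPn[h Hh]] := boolP (H \subset [set a : G | a.1 == 1]); last first.
  rewrite inE => nt_h1.
  have H_rot a : a \in H -> a.2 \in C.
    move=> Ha; apply: contraT => aC; exfalso; apply: (proper_subgroup_indivisible ltHG).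
    - by rewrite -(order_refl aC) (dvdn_trans (order_snd_dvdn a)) ?order_dvdG.
    - by rewrite -(order_Z nt_h1) (dvdn_trans (order_fst_dvdn h)) ?order_dvdG.
    - by rewrite -card_K cardSg ?normal_sub.
  exists y => s Ss; have [Cs | Cs] := boolP (s.2 \in C).
    exact: inv_conj_rot y_notin_rot Ss Cs.
  exact: refl_step y_notin_rot Ss (contra (H_rot s) Cs) Cs.
have [g gC Tg] := refl_conj_stable (subsetDr [set d | (1, d) \in S] C).
exists g => s Ss; have [Cs | Cs] := boolP (s.2 \in C); first exact: inv_conj_rot.
have [sH | sH] := boolP (s \in H); last exact: refl_step.
have s1 : s.1 = 1 by apply/eqP; have := subsetP H1 s sH; rewrite inE.
have : s.2 ^ g \in [set d | (1, d) \in S] :\: C.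
  by apply: Tg; rewrite !inE Cs -s1 -surjective_pairing.
by rewrite !inE /inv_conj s1 invg1 => /andP[].
Qed.

Lemma AutS_neq1_wreath : prime #|K| -> AutS [set: G] S != 1.
Proof.
move=> K_prime.
have : #|K| %| q * (2 * r) by rewrite -card_Z -card_gT -card_prod -cardsT cardSg ?subsetT.
rewrite !Euclid_dvdM // !dvdn_prime2 // => card_K.
have [g gS] : exists g, {in S, forall s, inv_conj g s \in S}.
  case/or3P: card_K => /eqP card_K.
  - exact: inv_conj_stable_Kq.
  - exact: inv_conj_stable_K2.
  - exact: inv_conj_stable_Kr.
exact: AutS_neq1_inv_conj gS.
Qed.

End Wreath.

End CyclicTimesDihedral.

End Dihedral.

Lemma dihedral_generators r : (1 < r)%N ->
  exists x y : 'D_(2 * r), [/\ #|('D_(2 * r))%type| = (2 * r)%N,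
    <[x]> <*> <[y]> = [set: 'D_(2 * r)], x ^+ r = 1, y ^+ 2 = 1 & x ^ y = x^-1].
Proof.
move=> r_gt1; rewrite mul2n.
have /existsP[[x y] /= /eqP[gen xr y2 xy]] := isoGrp_hom (Grp_dihedral r_gt1).
by exists x, y; split; rewrite // -cardsT card_dihedral.
Qed.

Theorem proposition4p10 (r q : nat) (S : {set CqD2r q r}) (K H : {group CqD2r q r}) :
  r \in [:: 3; 5]%N -> prime q -> odd q -> q != r ->
  S \subset [set: CqD2r q r] -> S^-1 = S ->
  gen_wreath [set: CqD2r q r] S K H -> prime #|K| ->
  AutS [set: CqD2r q r] S :!=: 1.
Proof.
move=> r35 q_prime q_odd q_neq_r _ S_invg SKH_wreath K_prime.
have [r_prime r_odd] : prime r /\ odd r by move: r35; rewrite !inE => /orP[] /eqP->.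
have [x [y [card_D gen_xy xr y2 xy]]] := dihedral_generators (prime_gt1 r_prime).
apply: (AutS_neq1_wreath r_prime r_odd card_D gen_xy xr y2 xy
          (mirror_symmetric_3_5 r35) q_prime q_odd q_neq_r _ S_invg SKH_wreath K_prime).
by rewrite card_ord Zp_cast ?prime_gt1.
Qed.
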